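(* Let $n\ge2$, let $\mathbb{A}=(A_{ij})_{i,j=1}^n$ be an operator matrix as in the context, and assume that for all $i\ne j$ there are constants $c_{ij},d_{ij}\ge0$ with $\|A_{ij}x_j\|_{X_i}\le c_{ij}\|A_{jj}x_j\|_{X_j}+d_{ij}\|x_j\|_{X_j}$ for all $x_j\in\mathcal{D}(A_{jj})$ and $\sum_{i=1,i\ne j}^nc_{ij}<1$ for every $j$. Then $\sigma(\mathbb{A})\subset C(\mathbb{A})$ and $\sigma(\mathbb{A})\subset\bigcap_{k=1}^nS^*_k(\mathbb{A})$.
   Context: Let $X_1,\ldots,X_n$ be complex Banach spaces and $X=X_1\times\cdots\times X_n$ with norm $\|x\|=\sum_i\|x_i\|_{X_i}$. For $i,j$, $A_{ij}:\mathcal{D}(A_{ij})\subset X_j\to X_i$ are linear, $A_{ii}$ closed, and for $i\ne j$ $\mathcal{D}(A_{jj})\subset\mathcal{D}(A_{ij})$. $\mathbb{A}=(A_{ij})$ acts on $\mathcal{D}(A_{11})\times\cdots\times\mathcal{D}(A_{nn})$ by $(\mathbb{A}x)_i=\sum_jA_{ij}x_j$. $\sigma(S)$ is the set of $\lambda$ for which $\lambda-S$ is not bijective from $\mathcal{D}(S)$ with bounded inverse. For $i\ne j$, the Cassini oval $C_{ij}(\mathbb{A}):=\sigma(A_{ii})\cup\sigma(A_{jj})\cup\widetilde C_{ij}(\mathbb{A})$, where $\widetilde C_{ij}(\mathbb{A})$ is the set of $\lambda\notin\sigma(A_{ii})\cup\sigma(A_{jj})$ with $\big(\sum_{l\ne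 i}\|A_{li}(\lambda-A_{ii})^{-1}\|\big)\big(\sum_{l\ne j}\|A_{lj}(\lambda-A_{jj})^{-1}\|\big)\ge1$, and $C(\mathbb{A}):=\bigcup_{1\le i<j\le n}C_{ij}(\mathbb{A})$. For $j\ne k$ and $\lambda\notin\sigma(A_{kk})\cup\sigma(A_{jj})$, $\mathcal{R}^*_{kj}(\lambda):=\sum_{i=1,i\ne k}^n\big(\|A_{ik}(\lambda-A_{kk})^{-1}A_{kj}(\lambda-A_{jj})^{-1}\|+\|(1-\delta_{ij})A_{ij}(\lambda-A_{jj})^{-1}\|\big)$; $S^*_{kj}(\mathbb{A}):=\sigma(A_{kk})\cup\sigma(A_{jj})\cup\{\lambda\notin\sigma(A_{kk})\cup\sigma(A_{jj}):\mathcal{R}^*_{kj}(\lambda)\ge1\}$ and $S^*_k(\mathbb{A}):=\bigcup_{j\ne k}S^*_{kj}(\mathbb{A})$. *)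

From HB Require Import structures.
From mathcomp Require Import all_boot all_order all_algebra.
From mathcomp Require Import all_classical all_reals all_analysis.
From mathcomp Require Import complex.

Unset Strict Implicit.
Unset Printing Implicit Defensive.

Import Order.TTheory GRing.Theory Num.Theory.
Import numFieldNormedType.Exports.
Local Open Scope classical_set_scope.
Local Open Scope ring_scope.

Section Defs.
Variable R : realType.
Local Notation C := R[i].

(* real-valued norm of a vector of a normed space over C
   (the library norm is C-valued, nonnegative, hence real) *)
Definition rnorm {V : normedModType C} (x : V) : R := complex.Re `|x|.

Definition opnorm {U V : normedModType C} (T : U -> V) : \bar R :=
  ereal_sup [set (rnorm (T y))%:E | y in [set y : U | rnorm y <= 1]].

Definition inverse_bdd {V W : Type} (nV : V -> R) (nW : W -> R)
  (D : set V) (L : V -> W) (Rinv : W -> V) : Prop :=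
  [/\ forall y, D (Rinv y),
      forall y, L (Rinv y) = y,
      forall x, D x -> Rinv (L x) = x
    & exists M : R, forall y, nV (Rinv y) <= M * nW y].

Definition bij_bdd_inv {V W : Type} (nV : V -> R) (nW : W -> R)
  (D : set V) (L : V -> W) : Prop := exists Rinv, inverse_bdd nV nW D L Rinv.

Definition spectrum {V : normedModType C} (D : set V) (S : V -> V) : set C :=
  [set l | ~ bij_bdd_inv rnorm rnorm D (fun x => l *: x - S x)].

(* the resolvent (l - S)^{-1} (an arbitrary map if l is in the spectrum) *)
Definition resolvent {V : normedModType C} (D : set V) (S : V -> V) (l : C)
  : V -> V :=
  match pselect (exists Rinv,
           inverse_bdd rnorm rnorm D (fun x => l *: x - S x) Rinv) with
  | left h => projT1 (cid h)
  | right _ => fun _ => 0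
  end.

Definition linear_on {U V : lmodType C} (D : set U) (T : U -> V) : Prop :=
  [/\ D 0, forall x y, D x -> D y -> D (x + y),
      forall (a : C) x, D x -> D (a *: x),
      forall x y, D x -> D y -> T (x + y) = T x + T y
    & forall (a : C) x, D x -> T (a *: x) = a *: T x].

Definition closed_op {V W : normedModType C} (D : set V) (T : V -> W) : Prop :=
  closed [set p : V * W | D p.1 /\ p.2 = T p.1].

Variables (n : nat) (X : 'I_n -> normedModType C)
  (A : forall i j : 'I_n, X j -> X i) (Dom : forall i j : 'I_n, set (X j)).

Definition prodnorm (x : forall i, X i) : R := \sum_(i < n) rnorm (x i).

Definition matdom : set (forall i, X i) := [set x : forall i, X i | forall j, Dom j j (x j)].

Definition shifted_mat (l : C) (x : forall i, X i) : forall i, X i :=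
  fun i => l *: x i - \sum_(j < n) A i j (x j).

Definition spec_mat : set C :=
  [set l | ~ bij_bdd_inv prodnorm prodnorm matdom (shifted_mat l)].

Definition specd (i : 'I_n) : set C := spectrum (Dom i i) (A i i).
Definition res (i : 'I_n) (l : C) : X i -> X i := resolvent (Dom i i) (A i i) l.

Definition colsum (i : 'I_n) (l : C) : \bar R :=
  (\sum_(m < n | m != i) opnorm (A m i \o res i l))%E.

Definition cassini_tilde (i j : 'I_n) : set C :=
  [set l | ~ specd i l /\ ~ specd j l /\ (1 <= colsum i l * colsum j l)%E].

Definition cassini (i j : 'I_n) : set C :=
  specd i `|` specd j `|` cassini_tilde i j.

Definition cassini_union : set C :=
  [set l | exists i j : 'I_n, (i < j)%N /\ cassini i j l].

Definition Rstar (k j : 'I_n) (l : C) : \bar R :=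
  (\sum_(i < n | i != k)
     (opnorm (A i k \o res k l \o A k j \o res j l)
      + (if i == j then 0 else opnorm (A i j \o res j l))))%E.

Definition Sstar_kj (k j : 'I_n) : set C :=
  specd k `|` specd j `|`
  [set l | ~ specd k l /\ ~ specd j l /\ (1 <= Rstar k j l)%E].

Definition Sstar (k : 'I_n) : set C :=
  [set l | exists j : 'I_n, j != k /\ Sstar_kj k j l].

End Defs.

Arguments rnorm {R V}.
Arguments opnorm {R U V}.
Arguments linear_on {R U V}.
Arguments closed_op {R V W}.
Arguments spec_mat {R n X}.
Arguments cassini_union {R n X}.
Arguments Sstar {R n X}.

From HB Require Import structures.
From mathcomp Require Import all_boot all_order all_algebra.
From mathcomp Require Import all_classical all_reals all_analysis.
From mathcomp Require Import complex.
From mathcomp Require Import ring lra.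
Import Order.TTheory GRing.Theory Num.Theory.
Import numFieldNormedType.Exports.
Local Open Scope classical_set_scope.
Local Open Scope ring_scope.

(* Fix l outside every sigma(A_jj) and let R_j = (l - A_jj)^-1.  Then
   l - AA = (I - K) diag(l - A_jj) on D(A_11) x ... x D(A_nn), where K_ij = A_ij R_j
   for i <> j and K_jj = 0; relative boundedness makes every K_ij bounded.  Hence l
   is in the resolvent set of AA as soon as I - K has a bounded inverse, and by the
   Neumann series it suffices that K strictly contracts a weighted l1 norm
   sum_i w_i ||y_i||, i.e. that sum_i w_i ||K_ij|| < w_j for all j.
   Outside the Cassini ovals this holds with a weight a >= 1 at an index p of
   maximal column sum and 1 elsewhere.  Outside S*_k, let E be the k-th column
   of K; as E^2 = 0, I - K = (I - E) (I - K') with K' = K - E + E K, both factors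
   are invertible, and the column sums of K' are the R*_kj(l), so a small weight
   on row k works for K'. *)

Lemma subrDB_cancel (G : zmodType) (x y z t : G) : x - (y + z - t) - (t - z) = x - y.
Proof. by rewrite -addrA -opprD addrA subrK addrK. Qed.

Lemma exists_neq {n : nat} : (1 < n)%N -> forall i : 'I_n, exists j, j != i.
Proof.
move=> n_gt1 i; have [->|] := eqVneq i (Ordinal (ltnW n_gt1)).
  by exists (Ordinal n_gt1).
by exists (Ordinal (ltnW n_gt1)); rewrite eq_sym.
Qed.

Section Spectrum.
Variable R : realType.
Local Notation C := R[i].
Local Notation "x %:RC" := (real_complex R x) (at level 2, format "x %:RC").

Lemma complex_ge0E (a : C) : 0 <= a -> a = (complex.Re a)%:RC.
Proof. by case: a => x y; rewrite lecE /= => /andP[/eqP -> _]. Qed.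

Lemma Re_normr_ge0 (a : C) : 0 <= complex.Re `|a|.
Proof. by have := normr_ge0 a; rewrite lecE => /andP[]. Qed.

Section RealNorm.
Context {V : normedModType C}.
Implicit Types x y : V.

Lemma normrE x : `|x| = (rnorm x)%:RC.
Proof. exact/complex_ge0E/normr_ge0. Qed.

Lemma rnorm_ge0 x : 0 <= rnorm x.
Proof. by have := normr_ge0 x; rewrite lecE => /andP[]. Qed.

Lemma rnorm0 : rnorm (0 : V) = 0.
Proof. by rewrite /rnorm normr0. Qed.

Lemma rnormN x : rnorm (- x) = rnorm x.
Proof. by rewrite /rnorm normrN. Qed.

Lemma rnorm_distrC x y : rnorm (x - y) = rnorm (y - x).
Proof. by rewrite /rnorm distrC. Qed.

Lemma rnorm0_eq0 {x : V} : rnorm x = 0 -> x = 0.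
Proof. by move=> x0; apply: normr0_eq0; rewrite normrE x0. Qed.

Lemma rnormD x y : rnorm (x + y) <= rnorm x + rnorm y.
Proof. by rewrite -lecR rmorphD /= -!normrE ler_normD. Qed.

Lemma rnormZ (a : C) x : rnorm (a *: x) = complex.Re `|a| * rnorm x.
Proof. by rewrite /rnorm normrZ normrE [`|a|]complex_ge0E // -rmorphM. Qed.

Lemma rnormZ_real (a : R) x : rnorm (a%:RC *: x) = `|a| * rnorm x.
Proof. by rewrite rnormZ normc_def /= expr0n /= addr0 sqrtr_sqr. Qed.

Lemma rnorm_sum (I : Type) (r : seq I) (P : pred I) (F : I -> V) :
  rnorm (\sum_(i <- r | P i) F i) <= \sum_(i <- r | P i) rnorm (F i).
Proof.
elim/big_ind2: _ => [|x1 x2 y1 y2 le1 le2|//]; first by rewrite rnorm0.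
exact: le_trans (rnormD _ _) (lerD le1 le2).
Qed.

End RealNorm.

Lemma cvgn_rnorm_lt {V : normedModType C} {u : nat -> V} {e : R} : cvgn u -> 0 < e ->
  \forall m \near \oo, rnorm (lim (u @ \oo) - u m) < e.
Proof.
move=> /cvgr_dist_lt cvu e0; have := cvu e%:RC; rewrite ltcR => /(_ e0).
by apply: filterS => m; rewrite normrE ltcR.
Qed.

Lemma rnorm_sub_geometric {V : normedModType C} {y : nat -> V} {B q : R} (N k : nat) :
  0 <= q -> q < 1 -> (forall m, rnorm (y m.+1 - y m) <= B * q ^+ m) ->
  rnorm (y (N + k)%N - y N) <= B * q ^+ N / (1 - q).
Proof.
move=> q0 q1 incr; have q1' : 0 < 1 - q by rewrite subr_gt0.
have B0 : 0 <= B.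
  by have := incr 0%N; rewrite expr0 mulr1; apply: le_trans; apply: rnorm_ge0.
suff tail : rnorm (y (N + k)%N - y N) <= B * q ^+ N * (1 - q ^+ k) / (1 - q).
  apply: le_trans tail _; rewrite ler_pM2r ?invr_gt0 // ler_piMr ?mulr_ge0 ?exprn_ge0 //.
  by rewrite lerBlDr lerDl exprn_ge0.
elim: k => [|k IHk]; first by rewrite addn0 subrr rnorm0 expr0 subrr mulr0 mul0r.
rewrite addnS -(subrK (y (N + k)%N) (y _)) -addrA.
apply: le_trans (rnormD _ _) (le_trans (lerD (incr _) IHk) _).
rewrite le_eqVlt exprD exprS; apply/orP; left; apply/eqP.
by field; rewrite lt0r_neq0.
Qed.

Lemma cvgn_geometric_increments (V : completeNormedModType C) (y : nat -> V) (B q : R) :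
  0 <= q -> q < 1 -> (forall m, rnorm (y m.+1 - y m) <= B * q ^+ m) -> cvgn y.
Proof.
move=> q0 q1 incr; have q1' : 0 < 1 - q by rewrite subr_gt0.
have B0 : 0 <= B.
  by have := incr 0%N; rewrite expr0 mulr1; apply: le_trans; apply: rnorm_ge0.
apply/cauchy_cvgP; apply: cauchy_exP => e e0.
have eE := @complex_ge0E e (ltW e0); set eps := complex.Re e in eE.
have eps0 : 0 < eps by move: e0; rewrite eE ltcR.
have geo0 : geometric 1 q @ \oo --> 0 by apply: cvg_geometric; rewrite ger0_norm.
have [|N _ smallN] := cvgr0_norm_lt _ geo0 (eps * (1 - q) / (B + 1)).
  by rewrite divr_gt0 ?mulr_gt0 // ltr_wpDl.
have := smallN N (leqnn N); rewrite /geometric /= mul1r ger0_norm ?exprn_ge0 // => qN.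
exists (y N), N => // m /= Nm.
rewrite -ball_normE /= normrE rnorm_distrC -(subnKC Nm) eE ltcR.
apply: le_lt_trans (rnorm_sub_geometric _ _ q0 q1 incr) _.
rewrite ltr_pdivrMr // (@le_lt_trans _ _ ((B + 1) * q ^+ N)) //.
  by apply: ler_wpM2r; rewrite ?exprn_ge0 ?lerDl.
by rewrite mulrC -ltr_pdivlMr ?ltr_wpDl.
Qed.

Section BoundedInverse.
Context {V W Z : Type} {nV : V -> R} {nW : W -> R} {nZ : Z -> R} {D : set V}.

Lemma bij_bdd_inv_eq_on {L L' : V -> W} :
  (forall x, D x -> L x = L' x) -> bij_bdd_inv R nV nW D L -> bij_bdd_inv R nV nW D L'.
Proof.
move=> eqL [Ri [RiD LRi RiL bdd]]; exists Ri; split=> // [y|x Dx].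
  by rewrite -eqL ?LRi.
by rewrite -eqL ?RiL.
Qed.

Lemma bij_bdd_inv_comp {L1 : V -> W} {L2 : W -> Z} : (forall w, 0 <= nW w) ->
  bij_bdd_inv R nV nW D L1 -> bij_bdd_inv R nW nZ setT L2 ->
  bij_bdd_inv R nV nZ D (L2 \o L1).
Proof.
move=> nW0 [R1 [R1D L1R1 R1L1 [M1 bdd1]]] [R2 [_ L2R2 R2L2 [M2 bdd2]]].
exists (R1 \o R2); split=> [y|y|x Dx|] /=; first exact: R1D.
- by rewrite L1R1 L2R2.
- by rewrite R2L2 // R1L1.
exists (`|M1| * M2) => y /=; apply: le_trans (bdd1 _) _.
apply: le_trans (ler_wpM2r (nW0 _) (ler_norm M1)) _.
by rewrite -mulrA; apply: ler_wpM2l => //; apply: bdd2.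
Qed.

End BoundedInverse.

Lemma bij_bdd_inv_diag {n : nat} {X : 'I_n -> normedModType C}
    (D : forall j, set (X j)) (L : forall j, X j -> X j) :
  (forall j, bij_bdd_inv R rnorm rnorm (D j) (L j)) ->
  bij_bdd_inv R (prodnorm R n X) (prodnorm R n X) [set x | forall j, D j (x j)]
    (fun x j => L j (x j)).
Proof.
move=> invL.
have [Ri invRi] : exists Ri : forall j, X j -> X j,
    forall j, inverse_bdd R rnorm rnorm (D j) (L j) (Ri j).
  by exists (fun j => projT1 (cid (invL j))) => j; apply: (projT2 (cid (invL j))).
have [M bddRi] : {M : 'I_n -> R & forall j y, rnorm (Ri j y) <= M j * rnorm y}.
  apply: (boolp.choice (P := fun j M => forall y, rnorm (Ri j y) <= M * rnorm y)) => j.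
  by case: (invRi j).
exists (fun y j => Ri j (y j)); split=> [y j|y|x Dx|].
- by case: (invRi j).
- by apply: functional_extensionality_dep => j; case: (invRi j).
- by apply: functional_extensionality_dep => j; case: (invRi j) => _ _ -> //; apply: Dx.
exists (\sum_(j < n) `|M j|) => y; rewrite /prodnorm mulr_sumr.
apply: ler_sum => j _; apply: le_trans (bddRi _ _) _.
apply: le_trans (ler_wpM2r (rnorm_ge0 _) (ler_norm (M j))) _.
apply: ler_wpM2r; first exact: rnorm_ge0.
by rewrite (bigD1 j) //= lerDl sumr_ge0.
Qed.

Section OperatorNorm.
Context {U V : normedModType C} {T : U -> V} {B : R}.
Hypotheses (TZ : forall (a : C) u, T (a *: u) = a *: T u)
  (B0 : 0 <= B) (TB : forall u, rnorm (T u) <= B * rnorm u).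

Let T0 : T 0 = 0.
Proof. by rewrite -(scale0r (0 : U)) TZ scale0r. Qed.

Lemma opnorm_le : (opnorm T <= B%:E)%E.
Proof.
apply: ge_ereal_sup => _ [u /= u1 <-]; rewrite lee_fin.
by apply: le_trans (TB u) _; rewrite ler_piMr.
Qed.

Lemma opnorm_ge0 : (0 <= opnorm T)%E.
Proof.
by apply: ereal_sup_ubound; exists 0; rewrite /= ?T0 rnorm0.
Qed.

Lemma opnorm_fin : opnorm T = (fine (opnorm T))%:E.
Proof. by rewrite fineK // ge0_fin_numE ?opnorm_ge0 // (le_lt_trans opnorm_le) ?ltry. Qed.

Lemma fine_opnorm_ge0 : 0 <= fine (opnorm T).
Proof. by rewrite -lee_fin -opnorm_fin opnorm_ge0. Qed.

Lemma rnorm_le_opnorm u : rnorm (T u) <= fine (opnorm T) * rnorm u.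
Proof.
have [u0|u_neq0] := eqVneq (rnorm u) 0.
  by rewrite (rnorm0_eq0 u0) T0 !rnorm0 mulr0.
have u_gt0 : 0 < rnorm u by rewrite lt0r u_neq0 rnorm_ge0.
pose v := (rnorm u)^-1%:RC *: u.
have v1 : rnorm v = 1 by rewrite rnormZ_real ger0_norm ?invr_ge0 ?rnorm_ge0 // mulVf.
have : ((rnorm (T v))%:E <= opnorm T)%E.
  by apply: ereal_sup_ubound; exists v; rewrite /= ?v1.
rewrite opnorm_fin lee_fin /v TZ rnormZ_real ger0_norm ?invr_ge0 ?rnorm_ge0 //.
by rewrite ler_pdivrMl // mulrC.
Qed.

End OperatorNorm.

Lemma opnorm0 (U V : normedModType C) : opnorm (fun _ : U => 0 : V) = 0%E.
Proof.
apply/le_anti/andP; split.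
  by apply: (@opnorm_le _ _ _ 0) => // u; rewrite rnorm0 mul0r.
by apply: opnorm_ge0 => a u; rewrite scaler0.
Qed.

Section Resolvent.
Context {V : normedModType C} {D : set V} {S : V -> V} {l : C}.
Hypotheses (linS : linear_on D S) (l_res : ~ spectrum R D S l).
Local Notation Ri := (resolvent R D S l).

Lemma not_spectrum : bij_bdd_inv R rnorm rnorm D (fun x => l *: x - S x).
Proof. exact: contrapT. Qed.

Lemma resolventP : inverse_bdd R rnorm rnorm D (fun x => l *: x - S x) Ri.
Proof.
rewrite /resolvent; case: pselect => [h|/(_ not_spectrum)[]].
exact: (projT2 (cid h)).
Qed.

Lemma resolvent_dom y : D (Ri y). Proof. by case: resolventP. Qed.

Lemma resolventK y : l *: Ri y - S (Ri y) = y.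
Proof. by case: resolventP => _ + _ _; apply. Qed.

Lemma shiftK x : D x -> Ri (l *: x - S x) = x.
Proof. by case: resolventP => _ _ + _; apply. Qed.

Lemma resolvent_bdd : exists2 M, 0 <= M & forall y, rnorm (Ri y) <= M * rnorm y.
Proof.
case: resolventP => _ _ _ [M bdd]; exists `|M| => // y.
exact: le_trans (bdd y) (ler_wpM2r (rnorm_ge0 _) (ler_norm M)).
Qed.

Lemma resolventD u v : Ri (u + v) = Ri u + Ri v.
Proof.
case: linS => _ DD _ SD _.
have [Du Dv] := (resolvent_dom u, resolvent_dom v).
have e : l *: (Ri u + Ri v) - S (Ri u + Ri v) = u + v.
  by rewrite SD // scalerDr opprD addrACA !resolventK.
by rewrite -e shiftK //; apply: DD.
Qed.

Lemma resolventZ (a : C) u : Ri (a *: u) = a *: Ri u.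
Proof.
case: linS => _ _ DZ _ SZ.
have Du := resolvent_dom u.
have e : l *: (a *: Ri u) - S (a *: Ri u) = a *: u.
  by rewrite SZ // scalerA mulrC -scalerA -scalerBr resolventK.
by rewrite -e shiftK //; apply: DZ.
Qed.

End Resolvent.

Lemma exists_uniform_lt {I : finType} {P : pred I} {f : I -> R} {b : R} :
  (forall i, P i -> f i < b) -> exists2 t, t < b & forall i, P i -> f i <= t.
Proof.
move=> flt; exists (\big[Num.max/(b - 1)]_(i | P i) f i).
  elim/big_ind: _ => [|x y xb yb|//]; first by rewrite gtrBl ltr01.
  by rewrite gt_max xb yb.
by move=> i Pi; rewrite (bigD1 i) //= le_max lexx.
Qed.

(* The column-sum condition says that k contracts the norm sum_i w_i |y_i|. *)
Definition weighted_contraction {I : finType} (k : I -> I -> R) : Prop :=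
  exists2 w : I -> R, forall i, 0 < w i & forall j, \sum_i w i * k i j < w j.

Lemma exists_cassini_scale {I : finType} {p : I} {r : I -> R} :
  (forall j, 0 <= r j) -> (forall j, r j <= r p) ->
  (forall j, j != p -> r j * r p < 1) ->
  exists a, [/\ 1 <= a, r p < a & forall j, j != p -> a * r j < 1].
Proof.
move=> r_ge0 r_le cass.
have [rp_lt1|rp_ge1] := ltP (r p) 1.
  by exists 1; split=> // j _; rewrite mul1r (le_lt_trans (r_le j)).
have [T T_lt1 T_ge] := exists_uniform_lt cass.
pose T' := Num.max T 0.
have T'_lt1 : T' < 1 by rewrite gt_max T_lt1 ltr01.
have T'_ge0 : 0 <= T' by rewrite le_max lexx orbT.
have T'_ge j : j != p -> r j * r p <= T' by move=> jp; rewrite le_max T_ge.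
exists (2 * r p / (1 + T')); split.
- by rewrite ler_pdivlMr ?ltr_wpDr // mul1r; lra.
- by rewrite ltr_pdivlMr ?ltr_wpDr //; nra.
- move=> j jp; have := T'_ge j jp; have := r_ge0 j.
  by rewrite mulrAC ltr_pdivrMr ?ltr_wpDr // mul1r; nra.
Qed.

Lemma cassini_contraction {I : finType} (k : I -> I -> R) :
  (forall i j, 0 <= k i j) -> (forall j, k j j = 0) ->
  (forall i j, i != j -> (\sum_l k l i) * (\sum_l k l j) < 1) ->
  weighted_contraction k.
Proof.
move=> k_ge0 k_diag cass; pose r j := \sum_l k l j.
have [i0 _|I0] := pickP (fun _ : I => true); last by exists (fun=> 1) => j; have := I0 j.
case: (@arg_maxP _ _ _ i0 xpredT r) => // p _ r_le.
have r_ge0 j : 0 <= r j by apply: sumr_ge0.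
have [a [a_ge1 rp_lt ra_lt]] :=
  exists_cassini_scale r_ge0 (fun j => r_le j isT) (fun j jp => cass j p jp).
exists (fun i => if i == p then a else 1) => [i|j] /=.
  by case: eqP => // _; apply: lt_le_trans a_ge1.
have [->|jp] := eqVneq j p.
  apply: le_lt_trans rp_lt; apply: ler_sum => i _.
  by case: eqP => [->|_]; rewrite ?k_diag ?mulr0 ?mul1r.
apply: le_lt_trans (ra_lt j jp); rewrite mulr_sumr.
by apply: ler_sum => i _; case: eqP => _; [exact: lexx | exact: ler_wpM2r].
Qed.

Lemma star_contraction {I : finType} (k0 : I) (b : I -> I -> R) :
  (forall i j, 0 <= b i j) -> (forall i, b i k0 = 0) ->
  (forall j, j != k0 -> \sum_(i | i != k0) b i j < 1) -> weighted_contraction b.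
Proof.
move=> b_ge0 b_k0 col_lt; have [T T_lt1 T_ge] := exists_uniform_lt col_lt.
pose S := \sum_j b k0 j.
have S_ge0 : 0 <= S by apply: sumr_ge0.
pose eps := (1 - T) / (1 + S).
have eps_gt0 : 0 < eps by rewrite divr_gt0 ?subr_gt0 // ltr_wpDr.
exists (fun i => if i == k0 then eps else 1) => [i|j] /=; first by case: eqP.
have [->|jk0] := eqVneq j k0; first by rewrite big1 // => i _; rewrite b_k0 mulr0.
rewrite (bigD1 k0) //= eqxx.
under eq_bigr => i /negbTE -> do rewrite mul1r.
have b_le : b k0 j <= S by rewrite /S (bigD1 j) //= lerDl sumr_ge0.
have : eps * b k0 j < 1 - T.
  apply: le_lt_trans (ler_wpM2l (ltW eps_gt0) b_le) _.
  by rewrite /eps mulrAC ltr_pdivrMr ?ltr_wpDr // mulrDr mulr1 ltrDr subr_gt0.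
by have := T_ge j jk0; lra.
Qed.

Section OperatorMatrix.
Context {n : nat} {X : 'I_n -> completeNormedModType C}.
Local Notation vec := (forall i, X i).
Local Notation pnorm := (prodnorm R n (fun i => X i : normedModType C)).

Definition mx_apply (K : forall i j : 'I_n, X j -> X i) (y : vec) : vec :=
  fun i => \sum_(j < n) K i j (y j).

Definition oneB_mx (K : forall i j : 'I_n, X j -> X i) (y : vec) : vec :=
  fun i => y i - mx_apply K y i.

Definition wnorm (w : 'I_n -> R) (y : vec) : R := \sum_(i < n) w i * rnorm (y i).

Section Contraction.
Variables (K : forall i j : 'I_n, X j -> X i) (k : 'I_n -> 'I_n -> R)
  (w : 'I_n -> R) (q : R).
Hypotheses (KD : forall i j u v, K i j (u + v) = K i j u + K i j v)
  (K_bdd : forall i j u, rnorm (K i j u) <= k i j * rnorm u)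
  (k_ge0 : forall i j, 0 <= k i j) (w_gt0 : forall i, 0 < w i)
  (q_ge0 : 0 <= q) (q_lt1 : q < 1)
  (col_le : forall j, \sum_(i < n) w i * k i j <= q * w j).

Lemma rnorm_le_wnorm y i : w i * rnorm (y i) <= wnorm w y.
Proof.
rewrite /wnorm (bigD1 i) //= lerDl; apply: sumr_ge0 => j _.
by rewrite mulr_ge0 ?rnorm_ge0 // ltW.
Qed.

Lemma mx_applyB u v i :
  mx_apply K u i - mx_apply K v i = mx_apply K (fun j => u j - v j) i.
Proof.
rewrite /mx_apply -sumrB; apply: eq_bigr => j _.
by apply: (addIr (K i j (v j))); rewrite -KD !subrK.
Qed.

Lemma oneB_mxB u v i :
  oneB_mx K (fun j => u j - v j) i = oneB_mx K u i - oneB_mx K v i.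
Proof. by rewrite /oneB_mx -mx_applyB !opprB addrACA [RHS]addrACA (addrC (- v i)). Qed.

Lemma wnorm_mx_apply v : wnorm w (mx_apply K v) <= q * wnorm w v.
Proof.
rewrite /wnorm /mx_apply.
apply: (@le_trans _ _ (\sum_(i < n) \sum_(j < n) w i * (k i j * rnorm (v j)))).
  apply: ler_sum => i _; rewrite -mulr_sumr ler_pM2l //.
  by apply: le_trans (rnorm_sum _ _ _ _) _; apply: ler_sum => j _.
rewrite exchange_big /= mulr_sumr; apply: ler_sum => j _.
under eq_bigr do rewrite mulrA.
by rewrite -mulr_suml mulrA ler_wpM2r ?rnorm_ge0.
Qed.

Lemma wnorm_oneB_mx y : (1 - q) * wnorm w y <= wnorm w (oneB_mx K y).
Proof.
have tri : wnorm w y <= wnorm w (oneB_mx K y) + wnorm w (mx_apply K y).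
  rewrite /wnorm -big_split /=; apply: ler_sum => i _.
  rewrite -mulrDr ler_pM2l // -{1}(subrK (mx_apply K y i) (y i)).
  exact: rnormD.
by have := wnorm_mx_apply y; move: tri; lra.
Qed.

Lemma oneB_mx_lim (z : vec) (y : nat -> vec) :
  (forall m i, y m.+1 i = z i + mx_apply K (y m) i) ->
  (forall i, cvgn (fun m => y m i)) ->
  oneB_mx K (fun i => lim ((fun m => y m i) @ \oo)) = z.
Proof.
move=> y_step y_cvg; set Y := fun i => _; apply: functional_extensionality_dep => i.
apply/eqP; rewrite -subr_eq0; apply/eqP/rnorm0_eq0/le_anti; rewrite rnorm_ge0 andbT.
apply/ler_addgt0Pr => e e_gt0; rewrite add0r.
pose S := \sum_(j < n) k i j.
have S_ge0 : 0 <= S by apply: sumr_ge0.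
pose del := e / (1 + S).
have del_gt0 : 0 < del by rewrite divr_gt0 // ltr_wpDr.
have [N _ y_near] : \forall m \near \oo, forall j, rnorm (Y j - y m j) < del.
  by apply: filter_forall => j; apply: cvgn_rnorm_lt (y_cvg j) del_gt0.
have -> : oneB_mx K Y i - z i = (Y i - y N.+1 i) + mx_apply K (fun j => y N j - Y j) i.
  by rewrite -mx_applyB y_step opprD !addrA subrK addrAC.
apply: le_trans (rnormD _ _) _.
have <- : del + S * del = e.
  by rewrite /del -{1}(mul1r (e / _)) -mulrDl mulrC mulfVK // gt_eqF // ltr_wpDr.
apply: lerD; first exact/ltW/(y_near N.+1 (leqnSn N)).
apply: le_trans (rnorm_sum _ _ _ _) _; rewrite /S mulr_suml; apply: ler_sum => j _.
apply: le_trans (K_bdd _ _ _) _; apply: ler_wpM2l => //.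
by rewrite rnorm_distrC ltW ?(y_near N (leqnn N)).
Qed.

Lemma oneB_mx_onto z : exists y, oneB_mx K y = z.
Proof.
pose y m := iter m (fun v i => z i + mx_apply K v i) z.
pose d m : vec := fun i => y m.+1 i - y m i.
have d_step m : d m.+1 = mx_apply K (d m).
  apply: functional_extensionality_dep => i.
  by rewrite /d /y !iterS -mx_applyB opprD addrACA subrr add0r.
have d_geo m : wnorm w (d m) <= q ^+ m * wnorm w (d 0%N).
  elim: m => [|m IHm]; first by rewrite expr0 mul1r.
  rewrite d_step exprS -mulrA; apply: le_trans (wnorm_mx_apply _) _.
  by rewrite ler_wpM2l.
exists (fun i => lim ((fun m => y m i) @ \oo)); apply: oneB_mx_lim => // i.
apply: (@cvgn_geometric_increments _ _ (wnorm w (d 0%N) / w i) q) => // m.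
rewrite mulrAC ler_pdivlMr // mulrC; apply: le_trans (rnorm_le_wnorm (d m) i) _.
by rewrite mulrC.
Qed.

Lemma pnorm_le_wnorm y : pnorm y <= (\sum_(i < n) (w i)^-1) * wnorm w y.
Proof.
rewrite mulr_suml; apply: ler_sum => i _.
by rewrite -ler_pdivrMl ?invr_gt0 // invrK rnorm_le_wnorm.
Qed.

Lemma wnorm_le_pnorm y : wnorm w y <= (\sum_(i < n) w i) * pnorm y.
Proof.
rewrite mulr_sumr; apply: ler_sum => i _; rewrite ler_wpM2r ?rnorm_ge0 //.
by rewrite (bigD1 i) //= lerDl sumr_ge0 // => j _; apply: ltW.
Qed.

Lemma oneB_mx_inj : injective (oneB_mx K).
Proof.
move=> u v euv; apply: functional_extensionality_dep => i.
have oneB_uv : oneB_mx K (fun j => u j - v j) = fun=> 0.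
  apply: functional_extensionality_dep => j.
  by rewrite oneB_mxB euv subrr.
have w_uv : w i * rnorm (u i - v i) <= 0.
  apply: le_trans (rnorm_le_wnorm (fun j => u j - v j) i) _.
  rewrite -(@ler_pM2l _ (1 - q)) ?subr_gt0 // mulr0.
  apply: le_trans (wnorm_oneB_mx _) _.
  by rewrite oneB_uv /wnorm big1 // => j _; rewrite rnorm0 mulr0.
apply/eqP; rewrite -subr_eq0; apply/eqP/rnorm0_eq0/le_anti.
by rewrite rnorm_ge0 andbT -(@ler_pM2l _ (w i)) // mulr0.
Qed.

Lemma bij_bdd_inv_oneB_mx_q : bij_bdd_inv R pnorm pnorm setT (oneB_mx K).
Proof.
pose G z := projT1 (cid (oneB_mx_onto z)).
have GK z : oneB_mx K (G z) = z := projT2 (cid (oneB_mx_onto z)).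
exists G; split=> // [x _|]; first by apply: oneB_mx_inj; rewrite GK.
exists ((\sum_(i < n) (w i)^-1) * ((1 - q)^-1 * (\sum_(i < n) w i))) => z.
apply: le_trans (pnorm_le_wnorm _) _; rewrite -mulrA; apply: ler_wpM2l.
  by apply: sumr_ge0 => i _; rewrite invr_ge0 ltW.
rewrite -mulrA ler_pdivlMl ?subr_gt0 // -{2}(GK z).
exact: le_trans (wnorm_oneB_mx _) (wnorm_le_pnorm _).
Qed.

End Contraction.

Lemma bij_bdd_inv_oneB_mx {K : forall i j : 'I_n, X j -> X i} {k : 'I_n -> 'I_n -> R} :
  (forall i j u v, K i j (u + v) = K i j u + K i j v) ->
  (forall i j u, rnorm (K i j u) <= k i j * rnorm u) -> (forall i j, 0 <= k i j) ->
  weighted_contraction k -> bij_bdd_inv R pnorm pnorm setT (oneB_mx K).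
Proof.
move=> KD K_bdd k_ge0 [w w_gt0 col_lt].
have col_ratio j : xpredT j -> (\sum_i w i * k i j) / w j < 1.
  by rewrite ltr_pdivrMr // mul1r col_lt.
have [q q_lt1 col_le] := exists_uniform_lt col_ratio.
apply: (@bij_bdd_inv_oneB_mx_q K k w (Num.max q 0)) => //.
- by rewrite le_max lexx orbT.
- by rewrite gt_max q_lt1 ltr01.
move=> j; have := col_le j isT; rewrite ler_pdivrMr // => le_q.
by apply: le_trans le_q _; rewrite ler_pM2r // le_max lexx.
Qed.

End OperatorMatrix.

Section OperatorMatrixSpectrum.
Context {n : nat} {X : 'I_n -> completeNormedModType C}
  {A : forall i j : 'I_n, X j -> X i} {Dom : forall i j : 'I_n, set (X j)}
  {c d : 'I_n -> 'I_n -> R}.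
Hypotheses (linA : forall i j, linear_on (Dom i j) (A i j))
  (domA : forall i j, i != j -> Dom j j `<=` Dom i j)
  (relbA : forall i j, i != j ->
    [/\ 0 <= c i j, 0 <= d i j & forall x, Dom j j x ->
        rnorm (A i j x) <= c i j * rnorm (A j j x) + d i j * rnorm x]).
Local Notation pnorm := (prodnorm R n (fun i => X i : normedModType C)).

Section ResolventPoint.
Variable l : C.
Hypothesis l_res : forall j, ~ specd _ _ _ A Dom j l.
Local Notation Rs j := (resolvent R (Dom j j) (A j j) l).

Definition AR : forall i j : 'I_n, X j -> X i :=
  fun i j u => if i == j then 0 else A i j (Rs j u).

Lemma AR_diag i u : AR i i u = 0.
Proof. by rewrite /AR eqxx. Qed.

Lemma AR_offdiag i j : i != j -> AR i j = A i j \o Rs j.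
Proof. by move=> ij; apply: funext => u; rewrite /AR (negbTE ij). Qed.

Lemma ARD i j u v : AR i j (u + v) = AR i j u + AR i j v.
Proof.
rewrite /AR; case: eqP => [_|/eqP ij]; first by rewrite addr0.
have [_ _ _ AD _] := linA i j; have Rs_dom := resolvent_dom (l_res j).
by rewrite (resolventD (linA j j) (l_res j)) AD //; apply: domA.
Qed.

Lemma ARZ i j (a : C) u : AR i j (a *: u) = a *: AR i j u.
Proof.
rewrite /AR; case: eqP => [_|/eqP ij]; first by rewrite scaler0.
have [_ _ _ _ AZ] := linA i j; have Rs_dom := resolvent_dom (l_res j).
by rewrite (resolventZ (linA j j) (l_res j)) AZ //; apply: domA.
Qed.

Lemma AR0 i j : AR i j 0 = 0.
Proof. by apply: (addrI (AR i j 0)); rewrite -ARD !addr0. Qed.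

Lemma ARB i j u v : AR i j (u - v) = AR i j u - AR i j v.
Proof. by apply: (addIr (AR i j v)); rewrite -ARD !subrK. Qed.

Lemma AR_sum i j (J : Type) (r : seq J) (P : pred J) (F : J -> X j) :
  AR i j (\sum_(m <- r | P m) F m) = \sum_(m <- r | P m) AR i j (F m).
Proof. by elim/big_ind2: _ => [|u1 u2 v1 v2 <- <-|//]; rewrite ?AR0 ?ARD. Qed.

(* A_jj R_j(l) = l R_j(l) - 1, so relative boundedness bounds A_ij R_j(l). *)
Lemma AR_bdd i j : exists2 B, 0 <= B & forall u, rnorm (AR i j u) <= B * rnorm u.
Proof.
rewrite /AR; case: eqP => [_|/eqP ij]; first by exists 0 => // u; rewrite rnorm0 mul0r.
have [M M_ge0 Rs_bdd] := resolvent_bdd (l_res j).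
have [c_ge0 d_ge0 relb] := relbA i j ij.
exists (c i j * (complex.Re `|l| * M + 1) + d i j * M).
  by rewrite addr_ge0 ?mulr_ge0 ?addr_ge0 ?mulr_ge0 // Re_normr_ge0.
move=> u; apply: le_trans (relb _ (resolvent_dom (l_res j) u)) _.
have -> : A j j (Rs j u) = l *: Rs j u - u.
  by apply/eqP; rewrite eq_sym subr_eq addrC -subr_eq (resolventK (l_res j)).
rewrite mulrDl -!mulrA; apply: lerD; last exact/ler_wpM2l/Rs_bdd.
apply: ler_wpM2l => //; apply: le_trans (rnormD _ _) _.
rewrite rnormN mulrDl mul1r lerD2r rnormZ -mulrA.
exact/ler_wpM2l/Rs_bdd/Re_normr_ge0.
Qed.

Definition arn i j : R := fine (opnorm (AR i j)).

Lemma opnorm_AR i j : opnorm (AR i j) = (arn i j)%:E.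
Proof. by have [B B_ge0 AR_le] := AR_bdd i j; apply: opnorm_fin (ARZ i j) B_ge0 AR_le. Qed.

Lemma arn_ge0 i j : 0 <= arn i j.
Proof.
by have [B B_ge0 AR_le] := AR_bdd i j; apply: fine_opnorm_ge0 (ARZ i j) B_ge0 AR_le.
Qed.

Lemma rnorm_AR_le i j u : rnorm (AR i j u) <= arn i j * rnorm u.
Proof.
by have [B B_ge0 AR_le] := AR_bdd i j; apply: rnorm_le_opnorm (ARZ i j) B_ge0 AR_le u.
Qed.

Lemma arn_diag i : arn i i = 0.
Proof.
by rewrite /arn (_ : AR i i = fun=> 0) ?opnorm0 //; apply: funext => u; rewrite AR_diag.
Qed.

Lemma colsum_AR j : colsum _ _ _ A Dom j l = (\sum_i arn i j)%:E.
Proof.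
rewrite /colsum /res [in RHS](bigD1 j) //= arn_diag add0r -sumEFin.
by apply: eq_bigr => i ij; rewrite -AR_offdiag // opnorm_AR.
Qed.

Lemma shifted_mat_factor x : matdom _ _ _ Dom x ->
  shifted_mat _ _ _ A l x = oneB_mx AR (fun j => l *: x j - A j j (x j)).
Proof.
move=> x_dom; apply: functional_extensionality_dep => i.
rewrite /shifted_mat /oneB_mx /mx_apply (bigD1 i) //= [in RHS](bigD1 i) //=.
rewrite AR_diag add0r opprD addrA; congr (_ - _); apply: eq_bigr => j ji.
by rewrite /AR eq_sym (negbTE ji) (shiftK (l_res j)) //; apply: x_dom.
Qed.

Lemma not_spec_mat_of_oneB : bij_bdd_inv R pnorm pnorm setT (oneB_mx AR) ->
  ~ spec_mat A Dom l.
Proof.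
move=> invK; apply.
apply: (bij_bdd_inv_eq_on (L := oneB_mx AR \o fun x j => l *: x j - A j j (x j))).
  by move=> x x_dom; rewrite shifted_mat_factor.
apply: bij_bdd_inv_comp _ _ invK => [y|]; first by apply: sumr_ge0 => i _; apply: rnorm_ge0.
exact: bij_bdd_inv_diag (fun j => not_spectrum (l_res j)).
Qed.

Lemma not_spec_mat_cassini :
  (forall i j, i != j -> ~ (1 <= colsum _ _ _ A Dom i l * colsum _ _ _ A Dom j l)%E) ->
  ~ spec_mat A Dom l.
Proof.
move=> cass; apply: not_spec_mat_of_oneB.
apply: (bij_bdd_inv_oneB_mx ARD rnorm_AR_le arn_ge0).
apply: cassini_contraction; [exact: arn_ge0 | exact: arn_diag | move=> i j ij].
rewrite ltNge; apply/negP => ge1.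
by apply: (cass i j ij); rewrite !colsum_AR -EFinM lee_fin.
Qed.

Section Star.
Variable k : 'I_n.

(* The column k of AR; indexing it by [j == k] avoids a cast from X k to X j. *)
Definition ARcol : forall i j : 'I_n, X j -> X i :=
  fun i j u => if j == k then AR i j u else 0.

(* I - ARstar = (I + ARcol) (I - AR); its column sums are the R*_kj(l). *)
Definition ARstar : forall i j : 'I_n, X j -> X i :=
  fun i j u => if j == k then 0 else AR i j u + AR i k (AR k j u).

Lemma mx_apply_ARstar Y i :
  mx_apply ARstar Y i = mx_apply AR Y i + AR i k (mx_apply AR Y k) - AR i k (Y k).
Proof.
rewrite /mx_apply AR_sum -big_split /= (bigD1 k) //= [in RHS](bigD1 k) //=.
rewrite {1}/ARstar eqxx add0r AR_diag AR0 addr0 addrAC subrr add0r.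
by apply: eq_bigr => j jk; rewrite /ARstar (negbTE jk).
Qed.

Lemma oneB_mx_ARstar Y : oneB_mx AR Y = oneB_mx ARcol (oneB_mx ARstar Y).
Proof.
apply: functional_extensionality_dep => i.
have ARcol_k : mx_apply ARcol (oneB_mx ARstar Y) i = AR i k (oneB_mx AR Y k).
  rewrite /mx_apply (bigD1 k) //= {1}/ARcol eqxx big1 ?addr0.
    by congr (AR i k (_ - _)); rewrite mx_apply_ARstar !AR_diag addr0 subr0.
  by move=> j jk; rewrite /ARcol (negbTE jk).
rewrite [in RHS]/oneB_mx ARcol_k /oneB_mx ARB mx_apply_ARstar.
by rewrite subrDB_cancel.
Qed.

Lemma ARcolD i j u v : ARcol i j (u + v) = ARcol i j u + ARcol i j v.
Proof. by rewrite /ARcol; case: eqP => _; rewrite ?ARD ?addr0. Qed.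

Lemma ARstarD i j u v : ARstar i j (u + v) = ARstar i j u + ARstar i j v.
Proof. by rewrite /ARstar; case: eqP => _; rewrite ?addr0 // !ARD addrACA. Qed.

Definition arn2 i j : R := fine (opnorm (AR i k \o AR k j)).

Let AR2Z i j (a : C) u : (AR i k \o AR k j) (a *: u) = a *: (AR i k \o AR k j) u.
Proof. by rewrite /= !ARZ. Qed.

Let AR2_bdd i j u : rnorm (AR i k (AR k j u)) <= arn i k * arn k j * rnorm u.
Proof.
apply: le_trans (rnorm_AR_le _ _ _) _; rewrite -mulrA.
exact/ler_wpM2l/rnorm_AR_le/arn_ge0.
Qed.

Let arn_prod_ge0 i j : 0 <= arn i k * arn k j.
Proof. exact: mulr_ge0 (arn_ge0 _ _) (arn_ge0 _ _). Qed.

Lemma opnorm_AR2 i j : opnorm (AR i k \o AR k j) = (arn2 i j)%:E.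
Proof. exact: opnorm_fin (AR2Z i j) (arn_prod_ge0 i j) (AR2_bdd i j). Qed.

Lemma arn2_ge0 i j : 0 <= arn2 i j.
Proof. exact: fine_opnorm_ge0 (AR2Z i j) (arn_prod_ge0 i j) (AR2_bdd i j). Qed.

Lemma rnorm_AR2_le i j u : rnorm (AR i k (AR k j u)) <= arn2 i j * rnorm u.
Proof. exact: rnorm_le_opnorm (AR2Z i j) (arn_prod_ge0 i j) (AR2_bdd i j) u. Qed.

Lemma Rstar_AR j : j != k ->
  Rstar _ _ _ A Dom k j l = (\sum_(i | i != k) (arn2 i j + arn i j))%:E.
Proof.
move=> jk; rewrite /Rstar /res -sumEFin; apply: eq_bigr => i ik; rewrite EFinD.
congr (_ + _)%E.
  rewrite -opnorm_AR2; congr opnorm; apply: funext => u /=.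
  by rewrite /AR (negbTE ik) eq_sym (negbTE jk).
by case: eqP => [->|/eqP ij]; rewrite ?arn_diag // -AR_offdiag // opnorm_AR.
Qed.

Lemma bij_bdd_inv_oneB_ARcol : bij_bdd_inv R pnorm pnorm setT (oneB_mx ARcol).
Proof.
pose b i j := if j == k then arn i j else 0.
have b_ge0 i j : 0 <= b i j by rewrite /b; case: eqP => _; rewrite ?arn_ge0.
apply: (bij_bdd_inv_oneB_mx (k := b) ARcolD) => // [i j u|].
  by rewrite /ARcol /b; case: eqP => _; rewrite ?rnorm_AR_le // rnorm0 mul0r.
have col0 j : j != k -> \sum_m b m j = 0.
  by move=> jk; apply: big1 => m _; rewrite /b (negbTE jk).
apply: cassini_contraction => // [j|i j ij].
  by rewrite /b; case: eqP => [->|//]; rewrite arn_diag.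
have [ki|ik] := eqVneq i k; last by rewrite col0 // mul0r ltr01.
by rewrite (col0 j) ?mulr0 ?ltr01 // -ki eq_sym.
Qed.

Lemma bij_bdd_inv_oneB_ARstar :
  (forall j, j != k -> \sum_(i | i != k) (arn2 i j + arn i j) < 1) ->
  bij_bdd_inv R pnorm pnorm setT (oneB_mx ARstar).
Proof.
move=> col_lt; pose b i j := if j == k then 0 else arn i j + arn2 i j.
have b_ge0 i j : 0 <= b i j.
  by rewrite /b; case: eqP => _; rewrite ?addr_ge0 ?arn_ge0 ?arn2_ge0.
apply: (bij_bdd_inv_oneB_mx (k := b) ARstarD) => // [i j u|].
  rewrite /ARstar /b; case: eqP => _; first by rewrite rnorm0 mul0r.
  rewrite mulrDl; apply: le_trans (rnormD _ _) _.
  exact: lerD (rnorm_AR_le _ _ _) (rnorm_AR2_le _ _ _).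
apply: (star_contraction k) => // [i|j jk]; first by rewrite /b eqxx.
by under eq_bigr => i _ do rewrite /b (negbTE jk) addrC; apply: col_lt.
Qed.

Lemma not_spec_mat_Sstar :
  (forall j, j != k -> ~ (1 <= Rstar _ _ _ A Dom k j l)%E) -> ~ spec_mat A Dom l.
Proof.
move=> star; apply: not_spec_mat_of_oneB.
apply: (bij_bdd_inv_eq_on (L := oneB_mx ARcol \o oneB_mx ARstar)) => [Y _|].
  by rewrite oneB_mx_ARstar.
apply: bij_bdd_inv_comp bij_bdd_inv_oneB_ARcol => [y|].
  by apply: sumr_ge0 => i _; apply: rnorm_ge0.
apply: bij_bdd_inv_oneB_ARstar => j jk; rewrite ltNge; apply/negP => ge1.
by apply: (star j jk); rewrite Rstar_AR // lee_fin.
Qed.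

End Star.

End ResolventPoint.

Lemma cassini_union_of {l i j} :
  i != j -> cassini _ _ _ A Dom i j l -> cassini_union A Dom l.
Proof.
move=> ij cass_ij; case: (ltngtP i j) => [lt_ij|lt_ji|eq_ij]; first by exists i, j.
  exists j, i; split=> //.
  case: cass_ij => [[sp|sp]|[spi [spj le1]]]; [left; right | left; left | right] => //.
  by do !split=> //; rewrite muleC.
by move: ij; rewrite (val_inj eq_ij) eqxx.
Qed.

Lemma spec_mat_sub_cassini_union : (1 < n)%N -> spec_mat A Dom `<=` cassini_union A Dom.
Proof.
move=> n_gt1 l spec_l; apply: contrapT => ncass.
have l_res i : ~ specd _ _ _ A Dom i l.
  move=> sp_i; have [j ji] := exists_neq n_gt1 i; apply: ncass.
  by apply: (@cassini_union_of l i j); [rewrite eq_sym | left; left].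
apply: (not_spec_mat_cassini _ l_res) spec_l => i j ij le1; apply: ncass.
by apply: (cassini_union_of ij); right; split; [apply: l_res | split; [apply: l_res |]].
Qed.

Lemma spec_mat_sub_Sstar k : (1 < n)%N -> spec_mat A Dom `<=` Sstar A Dom k.
Proof.
move=> n_gt1 l spec_l; apply: contrapT => nstar.
have l_res i : ~ specd _ _ _ A Dom i l.
  move=> sp_i; apply: nstar; have [ki|ik] := eqVneq i k.
    by have [j jk] := exists_neq n_gt1 k; exists j; split=> //; left; left; rewrite -ki.
  by exists i; split=> //; left; right.
apply: (not_spec_mat_Sstar _ l_res k) spec_l => j jk le1; apply: nstar.
by exists j; split=> //; right; split; [apply: l_res | split; [apply: l_res |]].
Qed.

End OperatorMatrixSpectrum.

End Spectrum.

Theorem theorem5p6 (R : realType) (n : nat)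
  (X : 'I_n -> completeNormedModType R[i])
  (A : forall i j : 'I_n, X j -> X i) (Dom : forall i j : 'I_n, set (X j)) :
  (2 <= n)%N ->
  (forall i j, linear_on (Dom i j) (A i j)) ->
  (forall i, closed_op (Dom i i) (A i i)) ->
  (forall i j, i != j -> Dom j j `<=` Dom i j) ->
  (exists c d : 'I_n -> 'I_n -> R,
     (forall i j, i != j ->
        [/\ 0 <= c i j, 0 <= d i j &
          forall x, Dom j j x ->
            rnorm (A i j x) <= c i j * rnorm (A j j x) + d i j * rnorm x])
     /\ (forall j, \sum_(i < n | i != j) c i j < 1)) ->
  spec_mat A Dom `<=` cassini_union A Dom /\
  spec_mat A Dom `<=` \bigcap_(k in [set: 'I_n]) Sstar A Dom k.
Proof.
move=> n_ge2 linA _ domA [c [d [relbA _]]].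
split; first exact: spec_mat_sub_cassini_union linA domA relbA n_ge2.
by move=> l spec_l k _; apply: spec_mat_sub_Sstar linA domA relbA k n_ge2 l spec_l.
Qed.
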